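(* Let $(X,\mathfrak{m})$ be a measurable space with $\mathfrak{m}$ an infinite $\sigma$-algebra containing every finite subset of $X$, and let $X^*=\mathfrak{m}^\beta\setminus e(X)$. Then every nonempty $G_\delta$-subset of $X^*$ has nonempty interior in $X^*$.
   Context: An $\mathfrak{m}$-filter is a family $p\subseteq\mathfrak{m}$ with $\emptyset\notin p$, $X\in p$, closed under supersets belonging to $\mathfrak{m}$ and under finite intersections; an $\mathfrak{m}$-ultrafilter is a maximal $\mathfrak{m}$-filter; $\mathfrak{m}^\beta$ is the set of all $\mathfrak{m}$-ultrafilters, topologized by the base $\{\widehat{A}:A\in\mathfrak{m}\}$ where $\widehat{A}=\{p\in\mathfrak{m}^\beta:A\in p\}$. The map $e:X\to\mathfrak{m}^\beta$ is $e(x)=\{A\in\mathfrak{m}:x\in A\}$. $X^*$ carries the subspace topology. *)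

(* Subsets of X are predicates X -> Prop; families of subsets
   are predicates (X -> Prop) -> Prop. Set equality is Leibniz equality of
   predicates (extensional via functional/propositional extensionality). *)
From Stdlib Require Import List.

Section Defs.
Variable X : Type.

Definition emptyset : X -> Prop := fun _ => False.
Definition fullset : X -> Prop := fun _ => True.
Definition inter (A B : X -> Prop) : X -> Prop := fun x => A x /\ B x.
Definition subset (A B : X -> Prop) : Prop := forall x, A x -> B x.

Definition sigma_algebra (m : (X -> Prop) -> Prop) : Prop :=
  m emptyset /\
  (forall A, m A -> m (fun x => ~ A x)) /\
  (forall F : nat -> X -> Prop, (forall n, m (F n)) -> m (fun x => exists n, F n x)).

Definition finite_set (A : X -> Prop) : Prop :=
  exists l : list X, forall x, A x <-> In x l.

Definition infinite_family (m : (X -> Prop) -> Prop) : Prop :=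
  ~ exists l : list (X -> Prop), forall A, m A -> In A l.

Definition m_filter (m : (X -> Prop) -> Prop) (p : (X -> Prop) -> Prop) : Prop :=
  (forall A, p A -> m A) /\
  ~ p emptyset /\
  p fullset /\
  (forall A B, p A -> m B -> subset A B -> p B) /\
  (forall A B, p A -> p B -> p (inter A B)).

Definition m_ultrafilter (m : (X -> Prop) -> Prop) (p : (X -> Prop) -> Prop) : Prop :=
  m_filter m p /\
  forall q, m_filter m q -> (forall A, p A -> q A) -> forall A, q A -> p A.

Definition e_pt (m : (X -> Prop) -> Prop) (x : X) : (X -> Prop) -> Prop :=
  fun A => m A /\ A x.

Definition in_Xstar (m : (X -> Prop) -> Prop) (p : (X -> Prop) -> Prop) : Prop :=
  m_ultrafilter m p /\ ~ exists x, p = e_pt m x.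

(* open subsets of m^beta for the topology generated by the base {A^ : A in m} *)
Definition beta_open (m : (X -> Prop) -> Prop) (U : ((X -> Prop) -> Prop) -> Prop) : Prop :=
  (forall p, U p -> m_ultrafilter m p) /\
  forall p, U p -> exists A, m A /\ p A /\
     (forall q, m_ultrafilter m q -> q A -> U q).

Definition Xstar_open (m : (X -> Prop) -> Prop) (V : ((X -> Prop) -> Prop) -> Prop) : Prop :=
  exists U, beta_open m U /\ forall p, V p <-> (U p /\ in_Xstar m p).

Definition Xstar_Gdelta (m : (X -> Prop) -> Prop) (G : ((X -> Prop) -> Prop) -> Prop) : Prop :=
  exists V : nat -> ((X -> Prop) -> Prop) -> Prop,
    (forall n, Xstar_open m (V n)) /\ forall p, G p <-> (forall n, V n p).

Definition Xstar_nonempty_interior (m : (X -> Prop) -> Prop) (G : ((X -> Prop) -> Prop) -> Prop) : Prop :=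
  exists V, Xstar_open m V /\ (exists p, V p) /\ (forall p, V p -> G p).

End Defs.

From Stdlib Require Import List.
From mathcomp Require Import ssreflect ssrfun ssrbool eqtype ssrnat.
From mathcomp Require Import boolp classical_sets filter.

(* Let p be a point of the G_delta set G = \bigcap_n V_n.  Each
   V_n contains a basic neighbourhood {r in X^* | A_n in r} of p; replacing
   A_n by A_0 /\ ... /\ A_n we may assume the A_n decrease.  As p is a free
   ultrafilter, every A_n is infinite, so we can pick pairwise distinct points
   x_n in A_n.  The countable set D = {x_n} lies in m, and the basic open set
   {r in X^* | D in r} works:
   - it is nonempty: an ultrafilter on all subsets of X refining the tail
     filter of (x_n) traces on m a point of X^* containing D;
   - it lies in G: a free r containing D contains every tail {x_k | k >= n},
     since only finitely many points are removed, and that tail lies in A_n.  The hypothesis that m is infinite only serves to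
   make X^* nonempty, which here already follows from G being nonempty. *)

Local Open Scope classical_set_scope.

Section SigmaAlgebra.
Context {X : Type} {m : (X -> Prop) -> Prop}.
Hypothesis m_sigma : sigma_algebra X m.

Lemma sigma_empty : m (emptyset X).
Proof. by case: m_sigma. Qed.

Lemma sigma_compl {A} : m A -> m (fun x => ~ A x).
Proof. by case: m_sigma => _ [+ _]; apply. Qed.

Lemma sigma_union {F : nat -> X -> Prop} :
  (forall n, m (F n)) -> m (fun x => exists n, F n x).
Proof. by case: m_sigma => _ [_]; apply. Qed.

Lemma sigma_full : m (fullset X).
Proof.
have := sigma_compl sigma_empty; congr m.
by rewrite predeqE => x; split => // _ [].
Qed.

(* Binary intersections, by De Morgan from countable unions and complements. *)
Lemma sigma_inter {A B} : m A -> m B -> m (inter X A B).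
Proof.
move=> mA mB.
pose F n := if n is 0 then fun x => ~ A x else fun x => ~ B x.
have mF n : m (F n) by case: n => [|n]; apply: sigma_compl.
have := sigma_compl (sigma_union mF); congr m.
rewrite predeqE => x; split => [notF | [Ax Bx] [[|n]] //].
by split; apply: contrapT => nx; apply: notF; [exists 0 | exists 1].
Qed.

Hypothesis m_finite : forall A, finite_set X A -> m A.

Lemma sigma_singleton (a : X) : m [set a].
Proof.
apply: m_finite; exists (a :: nil) => y /=.
by split => [-> | [-> | []]]; [left|].
Qed.

Definition seq_range (x : nat -> X) : X -> Prop := fun y => exists k, y = x k.

Lemma sigma_seq_range (x : nat -> X) : m (seq_range x).
Proof. exact: (sigma_union (fun k => sigma_singleton (x k))). Qed.

End SigmaAlgebra.

Section Ultrafilters.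
Context {X : Type} {m : (X -> Prop) -> Prop}.
Hypothesis m_sigma : sigma_algebra X m.

Lemma m_filter_nonempty {p C} : m_filter X m p -> p C -> exists y, C y.
Proof.
move=> [_ [p_ne [_ [p_sup _]]]] pC; apply: contrapT => noC; apply: p_ne.
apply: (p_sup C) => // [|y Cy]; first exact: (sigma_empty m_sigma).
by apply: noC; exists y.
Qed.

(* An m-ultrafilter contains each measurable set or its complement: otherwise
   the sets above some P /\ ~ A with P in p would form a larger m-filter. *)
Lemma m_ultrafilter_dichotomy {p A} :
  m_ultrafilter X m p -> m A -> p A \/ p (fun x => ~ A x).
Proof.
move=> [[p_m [p_ne [p_full [p_sup p_int]]]] p_max] mA.
have [pA | npA] := pselect (p A); [by left | right].
pose q C := m C /\ exists2 P, p P & forall y, P y -> ~ A y -> C y.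
have q_filter : m_filter X m q.
  split; [by move=> C [] | split; [|split; [|split]]].
  - move=> [_ [P pP PA]]; apply: npA; apply: (p_sup P) => // y Py.
    by apply: contrapT => nAy; case: (PA y Py nAy).
  - by split; [exact: (sigma_full m_sigma) | exists (fullset X)].
  - move=> C E [_ [P pP PC]] mE CE; split=> //.
    by exists P => // y Py nAy; apply/CE/PC.
  - move=> C E [mC [P pP PC]] [mE [P' pP' P'E]].
    split; first exact: (sigma_inter m_sigma).
    by exists (inter X P P'); [exact: p_int | move=> y [Py P'y] nAy; split; auto].
apply: (p_max q q_filter) => [C pC|]; first by split; [exact: p_m | exists C].
by split; [exact: (sigma_compl m_sigma) | exists (fullset X)].
Qed.

Lemma m_ultrafilter_principal {p a} :
  m_ultrafilter X m p -> p [set a] -> p = e_pt X m a.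
Proof.
move=> [[p_m [p_ne [_ [p_sup p_int]]]] _] pa; rewrite predeqE => A.
split=> [pA | [mA Aa]]; last by apply: (p_sup [set a]) => // y ->.
split; first exact: p_m.
apply: contrapT => nAa; apply: p_ne.
apply: (p_sup (inter X A [set a])); [exact: p_int | exact: (sigma_empty m_sigma) |].
by move=> y [Ay ya]; apply: nAa; rewrite -ya.
Qed.

Hypothesis m_finite : forall A, finite_set X A -> m A.

(* A point of X^* is a free ultrafilter: removing one point from a member
   leaves a member. *)
Lemma Xstar_remove_point {p C} a :
  in_Xstar X m p -> p C -> p (fun y => C y /\ y <> a).
Proof.
move=> [p_uf p_free] pC.
have [pa | pna] := m_ultrafilter_dichotomy p_uf (sigma_singleton m_finite a).
  by case: p_free; exists a; exact: m_ultrafilter_principal.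
by case: p_uf => [[_ [_ [_ [_ p_int]]]] _]; exact: p_int.
Qed.

Lemma Xstar_member_infinite {p C} :
  in_Xstar X m p -> p C -> forall l, exists y, C y /\ ~ In y l.
Proof.
move=> p_star pC l; apply: (m_filter_nonempty (proj1 (proj1 p_star))).
elim: l => [|a l IHl] /=.
  by have -> : (fun y => C y /\ ~ False) = C by rewrite predeqE => y; tauto.
have -> : (fun y => C y /\ ~ (a = y \/ In y l))
          = (fun y => (C y /\ ~ In y l) /\ y <> a).
  rewrite predeqE => y; split=> [[Cy nIn] | [[Cy nIn] nya]].
    by split; [split=> // yl; apply: nIn; right | move=> ya; apply: nIn; left].
  by split=> // -[ay | yl]; [apply: nya | apply: nIn].
exact: Xstar_remove_point.
Qed.

(* A point of X^* containing the range of a sequence contains every tail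
   {x_k | k >= n}, since each tail is the previous one minus one point. *)
Lemma Xstar_seq_tail {r} {x : nat -> X} :
  in_Xstar X m r -> r (seq_range x) -> forall n, r (seq_range (fun k => x (n + k))).
Proof.
move=> r_star rx; elim=> [|n IHn]; first by under eq_fun do rewrite add0n.
have [[_ [_ [_ [r_sup _]]]] _] := proj1 r_star.
apply: (r_sup _ _ (Xstar_remove_point (x n) r_star IHn)).
  exact: (sigma_seq_range m_sigma m_finite).
move=> y [[[|k] ->] ne_xn]; first by rewrite addn0 in ne_xn.
by exists k; rewrite addSnnS.
Qed.

End Ultrafilters.

Section FreeUltrafilter.
Context {X : Type}.

(* Any ultrafilter on the power set of X refining the filter of tails
   {x_k | k >= n} of an injective sequence is free and contains its range. *)
Lemma injective_seq_free_ultrafilter {x : nat -> X} : injective x ->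
  exists U : set_system X,
    [/\ UltraFilter U, U (seq_range x) & forall a, ~ U [set a]].
Proof.
move=> x_inj.
have [U [U_uf tailsU]] :=
  ultraFilterLemma (fmap_proper_filter x eventually_filter).
exists U; split=> //; first by apply: tailsU; exists 0%N => // k _; exists k.
move=> a Ua.
(* An injective sequence takes the value a at most once. *)
have eventually_not_a : (x @ eventually) (~` [set a]).
  have [[k0 ->] | not_value] := pselect (exists k, a = x k).
    by exists k0.+1 => // k /= lt_k0k /x_inj eq_kk0; rewrite eq_kk0 ltnn in lt_k0k.
  by exists 0%N => // k _ /= xka; apply: not_value; exists k.
apply: (filter_not_empty U); rewrite -(setICr [set a]).
exact: filterI Ua (tailsU _ eventually_not_a).
Qed.

End FreeUltrafilter.

Definition trace_on {X : Type} (m : (X -> Prop) -> Prop) (U : set_system X) :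
  (X -> Prop) -> Prop := fun C => m C /\ U C.

Section Traces.
Context {X : Type} {m : (X -> Prop) -> Prop}.
Hypothesis m_sigma : sigma_algebra X m.

(* The trace of an ultrafilter is an m-ultrafilter: a larger m-filter would
   contain some C together with its complement, which lies in the trace. *)
Lemma trace_m_ultrafilter U : UltraFilter U -> m_ultrafilter X m (trace_on m U).
Proof.
move=> U_uf.
have trace_filter : m_filter X m (trace_on m U).
  split; first by move=> C [].
  split; first by move=> [_ /filter_not_empty].
  split; first by split; [exact: (sigma_full m_sigma) | exact: filterT].
  split=> [C E [_ UC] mE CE | C E [mC UC] [mE UE]]; split=> //.
  - exact: filterS UC.
  - exact: (sigma_inter m_sigma).
  - exact: filterI.
split=> // q [q_m [q_ne [_ [q_sup q_int]]]] trace_q C qC.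
split; first exact: q_m.
have [// | UnC] := in_ultra_setVsetC C U_uf.
have qnC : q (~` C).
  by apply: trace_q; split=> //; apply: (sigma_compl m_sigma); exact: q_m.
case: q_ne; apply: (q_sup (inter X C (~` C))).
- exact: q_int.
- exact: (sigma_empty m_sigma).
- by move=> y [].
Qed.

Hypothesis m_finite : forall A, finite_set X A -> m A.

Lemma trace_in_Xstar U :
  UltraFilter U -> (forall a, ~ U [set a]) -> in_Xstar X m (trace_on m U).
Proof.
move=> U_uf U_free; split; first exact: trace_m_ultrafilter.
move=> [a trace_a]; apply: (U_free a).
have : trace_on m U [set a] by rewrite trace_a; split; [exact: sigma_singleton|].
by case.
Qed.

End Traces.

Section DistinctPoints.
Context {X : Type}.

(* If every B_n is infinite, one can pick pairwise distinct points x_n in B_n: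
   choose x_n in B_n outside the list of the points already chosen. *)
Lemma injective_choice {B : nat -> X -> Prop} :
  (forall n l, exists y, B n y /\ ~ In y l) ->
  exists x : nat -> X, injective x /\ forall k, B k (x k).
Proof.
move=> B_inf.
have [pick pickP] := choice (fun nl : nat * list X => B_inf nl.1 nl.2).
pose fix chosen n := if n is k.+1 then pick (k, chosen k) :: chosen k else nil.
pose x k := pick (k, chosen k).
have x_chosen n k : (k < n)%N -> In (x k) (chosen n).
  elim: n => [// | n IHn]; rewrite ltnS leq_eqVlt => /orP[/eqP -> | lt_kn].
    by left.
  by right; apply: IHn.
have x_fresh k : ~ In (x k) (chosen k) := proj2 (pickP (k, chosen k)).
exists x; split=> [i j xij | k]; last exact: (proj1 (pickP (k, chosen k))).
case: (ltngtP i j) => // [lt_ij | lt_ji].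
- by case: (x_fresh j); rewrite -xij; exact: x_chosen.
- by case: (x_fresh i); rewrite xij; exact: x_chosen.
Qed.

End DistinctPoints.

Section Neighbourhoods.
Context {X : Type} {m : (X -> Prop) -> Prop}.

Lemma Xstar_open_basic_nbhd {V p} : Xstar_open X m V -> V p ->
  in_Xstar X m p /\
  exists A, [/\ m A, p A & forall q, in_Xstar X m q -> q A -> V q].
Proof.
move=> [U [[_ U_base] V_eq]] /V_eq [Up p_star]; split=> //.
have [A [mA [pA AU]]] := U_base p Up.
exists A; split=> // q q_star qA; apply/V_eq; split=> //.
exact: AU (proj1 q_star) qA.
Qed.

Lemma Xstar_open_basic A : m A -> Xstar_open X m (fun r => r A /\ in_Xstar X m r).
Proof.
move=> mA; exists (fun r => m_ultrafilter X m r /\ r A); split.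
  by split=> [r [] // | r [_ rA]]; exists A; split=> // q.
move=> r; split=> [[rA r_star] | [[_ rA] r_star]]; split=> //.
by split=> //; case: r_star.
Qed.

(* Every sequence of members of an m-filter is refined by a decreasing one,
   namely the sequence of its finite intersections. *)
Lemma m_filter_decreasing_refinement {p} {A : nat -> X -> Prop} :
  m_filter X m p -> (forall n, p (A n)) ->
  exists B : nat -> X -> Prop,
    [/\ forall n, p (B n), forall n, B n `<=` A n
      & forall n k, (n <= k)%N -> B k `<=` B n].
Proof.
move=> [_ [_ [_ [_ p_int]]]] pA.
pose fix B n := if n is k.+1 then inter X (B k) (A k.+1) else A 0.
exists B; split.
- by elim=> [|n IHn] //=; exact: p_int.
- by case=> [|n] //= y [].
- move=> n; elim=> [|k IHk]; first by rewrite leqn0 => /eqP ->.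
  rewrite leq_eqVlt => /orP[/eqP -> // | /IHk Bkn y [Bky _]].
  exact: Bkn.
Qed.

End Neighbourhoods.

Section Trap.
Context {X : Type} {m : (X -> Prop) -> Prop}.
Hypothesis m_sigma : sigma_algebra X m.
Hypothesis m_finite : forall A, finite_set X A -> m A.

(* Take D = {x_n} with distinct x_n in A_0 /\ ... /\ A_n. *)
Lemma Xstar_Gdelta_trap {p} {A : nat -> X -> Prop} :
  in_Xstar X m p -> (forall n, p (A n)) ->
  exists D, [/\ m D, exists r, in_Xstar X m r /\ r D
              & forall r, in_Xstar X m r -> r D -> forall n, r (A n)].
Proof.
move=> p_star pA; have p_filter := proj1 (proj1 p_star).
have [B [pB BA B_decr]] := m_filter_decreasing_refinement p_filter pA.
have [x [x_inj xB]] :=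
  injective_choice (fun n => Xstar_member_infinite m_sigma m_finite p_star (pB n)).
have [U [U_uf Ux U_free]] := injective_seq_free_ultrafilter x_inj.
have mx := sigma_seq_range m_sigma m_finite x.
exists (seq_range x); split=> //.
  by exists (trace_on m U); split; [exact: trace_in_Xstar | split].
move=> r r_star rx n; have [[_ [_ [_ [r_sup _]]]] _] := proj1 r_star.
apply: (r_sup _ _ (Xstar_seq_tail m_sigma m_finite r_star rx n)).
  by case: p_filter => p_m _; exact: p_m.
by move=> y [k ->]; apply/BA/(B_decr n (n + k) (leq_addr _ _))/xB.
Qed.

End Trap.

Theorem theorem3p2 (X : Type) (m : (X -> Prop) -> Prop)
  (Hsig : sigma_algebra X m)
  (Hfin : forall A : X -> Prop, finite_set X A -> m A)
  (Hinf : infinite_family X m)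
  (G : ((X -> Prop) -> Prop) -> Prop)
  (HG : Xstar_Gdelta X m G)
  (Hne : exists p, G p) :
  Xstar_nonempty_interior X m G.
Proof.
have [p Gp] := Hne; have [V [V_open G_eq]] := HG.
have Vp : forall n, V n p by apply/G_eq.
have [p_star _] := Xstar_open_basic_nbhd (V_open 0) (Vp 0).
have [A A_nbhd] := choice (fun n => proj2 (Xstar_open_basic_nbhd (V_open n) (Vp n))).
have pA n : p (A n) by case: (A_nbhd n).
have [D [mD D_ne D_trap]] := Xstar_Gdelta_trap Hsig Hfin p_star pA.
exists (fun r => r D /\ in_Xstar X m r).
split; [exact: Xstar_open_basic | split; first by case: D_ne => r [? ?]; exists r].
move=> q [qD q_star]; apply/G_eq => n.
by case: (A_nbhd n) => _ _; apply => //; exact: D_trap.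
Qed.
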